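(* Consider the statements: (i) there exists no scalable acceptable deal; (ii) $\mathcal L$ is a linear subspace of $\mathbb R^N$; (iii) $\mathcal L=\{0\}$. Then (iii) implies (i). If $\ker(V_1):=\{x\in\mathbb R^N: V_1(x)=0\}=\{0\}$, then (i) implies (iii). If $\mathcal A^\infty\cap(-\mathcal A^\infty)=\{0\}$, then (ii) implies (i).
   Context: Standing setup: Let $\mathcal{X}$ be a real topological vector space partially ordered by a convex cone $\mathcal{X}_+\subset\mathcal X$; write $X\ge Y$ iff $X-Y\in\mathcal X_+$. Fix $N\in\mathbb N$ and: a set $\mathcal P\subset\mathbb R^N$ with $0\in\mathcal P$; a function $V_0:\mathbb R^N\to\mathbb R$ with $V_0(0)=0$ and $V_0(x)\ge -V_0(-x)$ for all $x\in\mathbb R^N$; a map $V_1:\mathbb R^N\to\mathcal X$ with $V_1(0)=0$ and $V_1(x)\le -V_1(-x)$ for all $x\in\mathbb R^N$; a set $\mathcal A\subset\mathcal X$ with $0\in\mathcal A$ and $\mathcal A+\mathcal X_+\subset\mathcal A$. Asymptotic notions: for a nonempty set $C$ in a topological vector space, $C^\infty=\{X:\exists\text{ nets }(X_\alpha)\subset C,\ (\lambda_\alpha)\subset[0,\infty),\ \lambda_\alpha\to0,\ \lambda_\alpha X_\alpha\to X\}$. For $f:\mathbb R^N\to\mathbb R$, its asymptotic function $f^\infty:\mathbb R^N\to[-\infty,\infty]$ is the function whose epigraph $\{(x,m)\in\mathbb R^N\times\mathbb R: f^\infty(x)\le m\}$ equals $(\operatorname{epi}f)^\infty$, where $\operatorname{epi}f=\{(x,m)\in\mathbb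 R^N\times\mathbb R: f(x)\le m\}$. A portfolio $x\in\mathbb R^N$ is a scalable acceptable deal if $x\in\mathcal P^\infty$, $V_0^\infty(x)\le0$ and $V_1(x)\in\mathcal A^\infty\setminus\{0\}$. Define $\mathcal L=\{x\in\mathcal P^\infty: V_0^\infty(x)\le0,\ V_1(x)\in\mathcal A^\infty\}$. *)

From HB Require Import structures.
From mathcomp Require Import all_boot all_order all_algebra.
From mathcomp Require Import all_classical all_reals all_analysis.
Set Implicit Arguments. Unset Strict Implicit. Unset Printing Implicit Defensive.
Import Order.TTheory GRing.Theory Num.Theory.
Local Open Scope classical_set_scope.
Local Open Scope ring_scope.

Definition directed_set (I : Type) (le : I -> I -> Prop) : Prop :=
  [/\ inhabited I, (forall i, le i i),
      (forall i j k, le i j -> le j k -> le i k) &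
      (forall i j, exists k, le i k /\ le j k)].

Definition net_cvg (T : topologicalType) (I : Type) (le : I -> I -> Prop)
  (x : I -> T) (p : T) : Prop :=
  forall U, nbhs p U -> exists i0, forall i, le i0 i -> U (x i).

Definition asym_cone (R : realType) (E : topologicalLmodType R) (C : set E) : set E :=
  [set X | exists (I : Type) (le : I -> I -> Prop) (Xa : I -> E) (la : I -> R),
     [/\ directed_set le, (forall i, C (Xa i)), (forall i, 0 <= la i),
         net_cvg le (la : I -> R^o) (0 : R^o) &
         net_cvg le (fun i => la i *: Xa i) X]].

Notation vecR R N := ('rV[R]_N).

Definition epi (R : realType) (N : nat) (f : vecR R N -> R) : set (vecR R N * R^o) :=
  [set xm | f xm.1 <= xm.2].

(** Asymptotic function f^oo : R^N -> [-oo, oo], the function whose epigraph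
    is (epi f)^oo, i.e. f^oo(x) = inf {m | (x, m) \in (epi f)^oo}. *)
Definition asym_fun (R : realType) (N : nat) (f : vecR R N -> R) (x : vecR R N) : \bar R :=
  ereal_inf [set (m%:E) | m in [set m : R | asym_cone (epi f) (x, (m : R^o))]].

Definition cone_ge (R : realType) (E : topologicalLmodType R) (Xp : set E) (X Y : E) : Prop :=
  Xp (X - Y).

Definition convex_cone (R : realType) (E : topologicalLmodType R) (Xp : set E) : Prop :=
  [/\ Xp 0, (forall X Y, Xp X -> Xp Y -> Xp (X + Y)) &
      (forall (l : R) X, 0 <= l -> Xp X -> Xp (l *: X))].

Definition scalable_acceptable_deal (R : realType) (E : topologicalLmodType R) (N : nat)
  (P : set (vecR R N)) (V0 : vecR R N -> R) (V1 : vecR R N -> E) (A : set E)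
  (x : vecR R N) : Prop :=
  [/\ asym_cone P x, (asym_fun V0 x <= 0)%E & (asym_cone A (V1 x) /\ V1 x <> 0)].

Definition Lset (R : realType) (E : topologicalLmodType R) (N : nat)
  (P : set (vecR R N)) (V0 : vecR R N -> R) (V1 : vecR R N -> E) (A : set E) : set (vecR R N) :=
  [set x | [/\ asym_cone P x, (asym_fun V0 x <= 0)%E & asym_cone A (V1 x)]].

Definition is_subspace (R : realType) (N : nat) (L : set (vecR R N)) : Prop :=
  [/\ L 0, (forall x y, L x -> L y -> L (x + y)) & (forall (a : R) x, L x -> L (a *: x))].

From HB Require Import structures.
From mathcomp Require Import all_boot all_order all_algebra.
From mathcomp Require Import all_classical all_reals all_analysis.
Import Order.TTheory GRing.Theory Num.Theory.
Local Open Scope classical_set_scope.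
Local Open Scope ring_scope.

(* A scalable acceptable deal is exactly an x in L with V1 x <> 0, so (i) says
   that L lies in the kernel of V1; since 0 is in L, this gives (iii) => (i),
   and (i) => (iii) when V1 is injective.  For (ii) => (i): if L is a subspace
   and x is in L, then so is -x, hence V1 (-x) is in A^oo.  Now
   -V1 x = V1 (-x) + k with k in X_+, and A^oo is stable under adding elements
   of X_+ because A is; so V1 x is in A^oo and in -A^oo, hence V1 x = 0. *)

Lemma net_cvg_comp {T U : topologicalType} {I : Type} {le : I -> I -> Prop}
    {f : T -> U} {x : I -> T} {p : T} :
  {for p, continuous f} -> net_cvg le x p -> net_cvg le (f \o x) (f p).
Proof. by move=> fp xp V /fp; exact: xp. Qed.

Lemma addr_continuous {M : topologicalZmodType} (k : M) :
  continuous (fun z : M => z + k).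
Proof.
move=> z; apply: (@continuous_comp _ _ _ (fun z => (z, k)) (fun x : M * M => x.1 + x.2)).
  by apply: cvg_pair; [exact: cvg_id | exact: cvg_cst].
exact: add_continuous.
Qed.

Section DirectedNets.
Variables (I : Type) (le : I -> I -> Prop).
Hypothesis le_directed : directed_set le.

Lemma net_cvg_if (T : topologicalType) (b : I -> bool) (x y : I -> T) (p : T) :
  net_cvg le x p -> net_cvg le y p -> net_cvg le (fun i => if b i then x i else y i) p.
Proof.
case: le_directed => _ _ le_trans le_ub xp yp U Up.
have [[i1 x1] [i2 y2]] := (xp U Up, yp U Up).
have [i [i1i i2i]] := le_ub i1 i2.
by exists i => j ij; case: (b j); [apply: x1 | apply: y2]; exact: le_trans ij.
Qed.

Definition le_nat (p q : I * nat) : Prop := le p.1 q.1 /\ (p.2 <= q.2)%N.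

Lemma directed_set_le_nat : directed_set le_nat.
Proof.
case: le_directed => [[i0] le_refl le_trans le_ub]; split.
- exact: inhabits (i0, 0%N).
- by move=> p; split.
- move=> p q r [pq1 pq2] [qr1 qr2]; split; [exact: le_trans qr1 | exact: leq_trans qr2].
- move=> [i n] [j m]; have [l [il jl]] := le_ub i j.
  by exists (l, maxn n m); rewrite /le_nat /= leq_maxl leq_maxr.
Qed.

Lemma net_cvg_fst (T : topologicalType) (x : I -> T) (p : T) :
  net_cvg le x p -> net_cvg le_nat (fun q => x q.1) p.
Proof. by move=> xp U /xp[i0 x0]; exists (i0, 0%N) => q [/x0]. Qed.

Lemma net_cvg_snd (T : topologicalType) (u : nat -> T) (p : T) :
  u @ \oo --> p -> net_cvg le_nat (fun q => u q.2) p.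
Proof.
case: le_directed => [[i0] _ _ _] up U /up[n0 _ u0].
by exists (i0, n0) => q [_]; exact: u0.
Qed.

End DirectedNets.

Arguments le_nat {I}.

Section AsymptoticCone.
Context {R : realType} {E : topologicalLmodType R}.

Lemma asym_cone0 (C : set E) (p : E) : C p -> asym_cone C 0.
Proof.
move=> Cp; exists unit, (fun _ _ => True), (fun _ => p), (fun _ => 0 : R).
split=> //.
- by move=> U /nbhs_singleton U0; exists tt.
- by move=> U /nbhs_singleton U0; exists tt; rewrite scale0r.
Qed.

(* If la_i Xa_i -> X then la_i (Xa_i + la_i^-1 k) -> X + k.  Where la_i = 0 that
   term is replaced by (n + 1) k scaled by 1 / (n + 1), which is why the index
   set is paired with nat. *)
Lemma asym_cone_addr (A : set E) (k X : E) :
  A 0 -> (forall a (l : R), 0 <= l -> A a -> A (a + l *: k)) ->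
  asym_cone A X -> asym_cone A (X + k).
Proof.
move=> A0 Ak [I [le [Xa [la [le_directed AXa la_ge0 la0 laXa]]]]].
pose la' q := if 0 < la q.1 then la q.1 else harmonic q.2.
pose Xa' q := if 0 < la q.1 then Xa q.1 + (la q.1)^-1 *: k else q.2.+1%:R *: k.
have la'Xa' q : la' q *: Xa' q = la q.1 *: Xa q.1 + k.
  rewrite /la' /Xa'; case: ifP => [la_gt0 | la_le0].
    by rewrite scalerDr scalerA mulfV ?scale1r // gt_eqF.
  have -> : la q.1 = 0 by apply/eqP; rewrite eq_le la_ge0 leNgt la_le0.
  by rewrite scale0r add0r scalerA mulVf ?scale1r.
exists (I * nat)%type, (le_nat le), Xa', la'; split.
- exact: directed_set_le_nat.
- move=> q; rewrite /Xa'; case: ifP => [la_gt0 | _].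
    by apply: Ak => //; rewrite invr_ge0 ltW.
  by rewrite -[_ *: k]add0r; apply: Ak.
- by move=> q; rewrite /la'; case: ifP => [/ltW | _] //; exact: harmonic_ge0.
- apply: net_cvg_if; first exact: directed_set_le_nat.
    exact: net_cvg_fst.
  exact/net_cvg_snd/cvg_harmonic.
- rewrite (funext la'Xa'); apply: (@net_cvg_fst _ _ _ (fun i => la i *: Xa i + k)).
  exact: (net_cvg_comp (addr_continuous k X) laXa).
Qed.

Lemma asym_cone_add_cone (Xp A : set E) (X k : E) :
  convex_cone Xp -> A 0 -> (forall a k, A a -> Xp k -> A (a + k)) ->
  asym_cone A X -> Xp k -> asym_cone A (X + k).
Proof.
move=> [_ _ XpZ] A0 AXp AX Xpk; apply: asym_cone_addr AX => // a l l_ge0 Aa.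
exact/AXp/XpZ.
Qed.

End AsymptoticCone.

Lemma asym_fun0_le0 (R : realType) (N : nat) (f : 'rV[R]_N -> R) :
  (asym_fun f 0 <= 0)%E.
Proof.
apply: ge_ereal_inf; exists 0%:E => //; exists 0 => //=.
have epi_f0 : epi f (0, f 0 : R^o) by exact: lexx.
exact: asym_cone0 epi_f0.
Qed.

Section ScalableDeals.
Context {R : realType} {E : topologicalLmodType R} {N : nat}.
Context {P : set 'rV[R]_N} {V0 : 'rV[R]_N -> R} {V1 : 'rV[R]_N -> E} {A : set E}.

Local Notation L := (Lset P V0 V1 A).

Lemma Lset0 (p : 'rV[R]_N) (a : E) : P p -> A a -> V1 0 = 0 -> L 0.
Proof.
move=> Pp Aa V10; split; first exact: asym_cone0 Pp.
  exact: asym_fun0_le0.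
by rewrite V10; exact: asym_cone0 Aa.
Qed.

Lemma no_scalable_deal_iff :
  ~ (exists x, scalable_acceptable_deal P V0 V1 A x) <-> (forall x, L x -> V1 x = 0).
Proof.
split=> [noD x [Px V0x AV1x] | LV1 [x [Px V0x [AV1x V1x_neq0]]]].
  by apply: contrapT => V1x_neq0; apply: noD; exists x.
by apply/V1x_neq0/LV1.
Qed.

Lemma Lset_opp_V1 {Xp : set E} :
  convex_cone Xp -> A 0 -> (forall a k, A a -> Xp k -> A (a + k)) ->
  (forall x, cone_ge Xp (- V1 (- x)) (V1 x)) ->
  is_subspace L -> forall x, L x -> asym_cone A (- V1 x).
Proof.
move=> cXp A0 AXp V1_odd [_ _ LZ] x /(LZ (-1)); rewrite scaleN1r => -[_ _ AV1Nx].
have -> : - V1 x = V1 (- x) + (- V1 (- x) - V1 x) by rewrite addNKr.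
exact: asym_cone_add_cone cXp A0 AXp AV1Nx (V1_odd x).
Qed.

End ScalableDeals.

Theorem mainTheorem7 (R : realType) (E : topologicalLmodType R) (Xp : set E) (N : nat)
  (P : set 'rV[R]_N) (V0 : 'rV[R]_N -> R) (V1 : 'rV[R]_N -> E) (A : set E) :
  convex_cone Xp ->
  P 0 ->
  V0 0 = 0 -> (forall x, V0 x >= - V0 (- x)) ->
  V1 0 = 0 -> (forall x, cone_ge Xp (- V1 (- x)) (V1 x)) ->
  A 0 -> (forall a k, A a -> Xp k -> A (a + k)) ->
  let i_ := ~ (exists x, scalable_acceptable_deal P V0 V1 A x) in
  let ii_ := is_subspace (Lset P V0 V1 A) in
  let iii_ := Lset P V0 V1 A = [set 0] in
  [/\ (iii_ -> i_),
      ((forall x, V1 x = 0 -> x = 0) -> i_ -> iii_) &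
      (asym_cone A `&` [set - X | X in asym_cone A] = [set 0] -> ii_ -> i_)].
Proof.
move=> cXp P0 _ _ V10 V1_odd A0 AXp i_ ii_ iii_.
have L0 : Lset P V0 V1 A 0 by exact: Lset0 P0 A0 V10.
split.
- by move=> L_0; apply/no_scalable_deal_iff => x; rewrite L_0 => ->.
- move=> V1_inj /no_scalable_deal_iff noD.
  by apply/seteqP; split=> [x /noD/V1_inj | x /= ->].
- move=> A_pointed Lsub; apply/no_scalable_deal_iff => x Lx.
  have : (asym_cone A `&` [set - X | X in asym_cone A]) (V1 x).
    split; first by case: Lx.
    by exists (- V1 x); [exact: Lset_opp_V1 cXp A0 AXp V1_odd Lsub x Lx | rewrite opprK].
  by rewrite A_pointed.
Qed.
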